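(* Fix a user $n$ and a server $m$, and fix constants $x_{n,m}\in\{0,1\}$, $\varphi_n\in[0,1]$, $d_n>0$, $\eta_m>0$, $\zeta_{n,m}\in(0,1]$, $f_m>0$, $\kappa_m>0$, $\omega_t\ge 0$, $\omega_e\ge 0$, and set $\omega_b=1$. For $\gamma_{n,m}\in(0,1)$ define $T^{(sp)}_{n,m}=\frac{x_{n,m}\varphi_n d_n\eta_m}{\gamma_{n,m}\zeta_{n,m}f_m}$, $T^{(sg)}_{n,m}=\frac{x_{n,m}\varphi_n d_n\omega_b\eta_m}{(1-\gamma_{n,m})\zeta_{n,m}f_m}$, $E^{(sp)}_{n,m}=\kappa_m x_{n,m}\varphi_n d_n\eta_m(\gamma_{n,m}\zeta_{n,m}f_m)^2$, $E^{(sg)}_{n,m}=\kappa_m x_{n,m}\varphi_n d_n\eta_m\omega_b\big[(1-\gamma_{n,m})\zeta_{n,m}f_m\big]^2$, and let $h(\gamma_{n,m})=\omega_t\big(T^{(sp)}_{n,m}+T^{(sg)}_{n,m}\big)+\omega_e\big(E^{(sp)}_{n,m}+E^{(sg)}_{n,m}\big)$ be the part of the server cost of user $n$ at server $m$ that depends on $\gamma_{n,m}$ when the block validation delay is disregarded. Then $\gamma_{n,m}^\star=\tfrac12$ is an optimal value of $\gamma_{n,m}$, i.e. $h(\tfrac12)\le h(\gamma_{n,m})$ for all $\gamma_{n,m}\in(0,1)$.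
   Context: Setting: a blockchain-enabled Metaverse system where user $n$ offloads a fraction $\varphi_n$ of its $d_n$ data bits to server $m$ (association indicator $x_{n,m}$). Server $m$ has maximum computing resource $f_m$ (cycles/s), allocates a fraction $\zeta_{n,m}$ of it to user $n$, and splits this allocation into a fraction $\gamma_{n,m}\in(0,1)$ used for processing the offloaded data and a fraction $1-\gamma_{n,m}$ used for generating the blockchain block. $\eta_m$ is the number of CPU cycles per bit at server $m$, $\kappa_m$ the effective switched capacitance of the server chip, $\omega_b$ the data size changing ratio between the offloaded data and the blockchain task, and $\omega_t,\omega_e$ the weights of delay and energy in the cost. $T^{(sp)},E^{(sp)}$ are the server processing delay and energy, and $T^{(sg)},E^{(sg)}$ the block generation delay and energy. *)

From Stdlib Require Import Reals.
Open Scope R_scope.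

(* Data size changing ratio, fixed to 1 in the lemma. *)
Definition omega_b : R := 1.

Definition T_sp (x phi d eta zeta f gamma : R) : R :=
  x * phi * d * eta / (gamma * zeta * f).
Definition T_sg (x phi d eta zeta f wb gamma : R) : R :=
  x * phi * d * wb * eta / ((1 - gamma) * zeta * f).
Definition E_sp (kappa x phi d eta zeta f gamma : R) : R :=
  kappa * x * phi * d * eta * (gamma * zeta * f) ^ 2.
Definition E_sg (kappa x phi d eta zeta f wb gamma : R) : R :=
  kappa * x * phi * d * eta * wb * ((1 - gamma) * zeta * f) ^ 2.

Definition h (wt we kappa x phi d eta zeta f wb gamma : R) : R :=
  wt * (T_sp x phi d eta zeta f gamma + T_sg x phi d eta zeta f wb gamma)
  + we * (E_sp kappa x phi d eta zeta f gamma + E_sg kappa x phi d eta zeta f wb gamma).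

(* With [omega_b = 1] both halves of the cost are symmetric in [gamma] and
   [1 - gamma]: the two delays add up to [K / (zeta f) / (gamma (1 - gamma))]
   and the two energies to [kappa K (zeta f)^2 (gamma^2 + (1 - gamma)^2)],
   where [K = x phi d eta >= 0].  Since
   [gamma (1 - gamma) = 1/4 - (gamma - 1/2)^2] and
   [gamma^2 + (1 - gamma)^2 = 1/2 + 2 (gamma - 1/2)^2], the delay part and the
   energy part are each minimised at [gamma = 1/2], hence so is any
   nonnegative combination of them. *)
From Stdlib Require Import Reals Lra.
Open Scope R_scope.

Lemma mul_compl_le_quarter (g : R) : g * (1 - g) <= 1 / 4.
Proof. pose proof (pow2_ge_0 (g - 1 / 2)); nra. Qed.

Lemma sqr_add_sqr_compl_ge_half (g : R) : 1 / 2 <= g ^ 2 + (1 - g) ^ 2.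
Proof. pose proof (pow2_ge_0 (g - 1 / 2)); nra. Qed.

Lemma inv_mul_compl_ge_at_half (g : R) :
  0 < g < 1 -> / (1 / 2 * (1 - 1 / 2)) <= / (g * (1 - g)).
Proof.
  intros hg.
  apply Rinv_le_contravar; [nra |].
  pose proof (mul_compl_le_quarter g); lra.
Qed.

Lemma T_sp_add_T_sg_unit_ratio (x phi d eta zeta f g : R) :
  zeta * f <> 0 -> 0 < g < 1 ->
  T_sp x phi d eta zeta f g + T_sg x phi d eta zeta f omega_b g
  = x * phi * d * eta / (zeta * f) * / (g * (1 - g)).
Proof.
  intros hzf hg; unfold T_sp, T_sg, omega_b.
  field; repeat split; try lra; intros ->; lra.
Qed.

Lemma E_sp_add_E_sg_unit_ratio (kappa x phi d eta zeta f g : R) :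
  E_sp kappa x phi d eta zeta f g + E_sg kappa x phi d eta zeta f omega_b g
  = kappa * (x * phi * d * eta) * (zeta * f) ^ 2 * (g ^ 2 + (1 - g) ^ 2).
Proof. unfold E_sp, E_sg, omega_b; ring. Qed.

Lemma T_sum_le_at_half (x phi d eta zeta f g : R) :
  0 <= x * phi * d * eta -> 0 < zeta * f -> 0 < g < 1 ->
  T_sp x phi d eta zeta f (1 / 2) + T_sg x phi d eta zeta f omega_b (1 / 2)
  <= T_sp x phi d eta zeta f g + T_sg x phi d eta zeta f omega_b g.
Proof.
  intros hK hzf hg.
  rewrite !T_sp_add_T_sg_unit_ratio by lra.
  apply Rmult_le_compat_l.
  - apply Rle_mult_inv_pos; assumption.
  - exact (inv_mul_compl_ge_at_half g hg).
Qed.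

Lemma E_sum_le_at_half (kappa x phi d eta zeta f g : R) :
  0 <= kappa * (x * phi * d * eta) ->
  E_sp kappa x phi d eta zeta f (1 / 2) + E_sg kappa x phi d eta zeta f omega_b (1 / 2)
  <= E_sp kappa x phi d eta zeta f g + E_sg kappa x phi d eta zeta f omega_b g.
Proof.
  intros hK.
  rewrite !E_sp_add_E_sg_unit_ratio.
  apply Rmult_le_compat_l.
  - apply Rmult_le_pos; [assumption | apply pow2_ge_0].
  - pose proof (sqr_add_sqr_compl_ge_half g); lra.
Qed.

Theorem lemma4 (x phi d eta zeta f kappa wt we : R)
  (hx : x = 0 \/ x = 1) (hphi : 0 <= phi <= 1) (hd : 0 < d) (heta : 0 < eta)
  (hzeta : 0 < zeta <= 1) (hf : 0 < f) (hkappa : 0 < kappa)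
  (hwt : 0 <= wt) (hwe : 0 <= we) :
  forall gamma : R, 0 < gamma < 1 ->
    h wt we kappa x phi d eta zeta f omega_b (1 / 2)
    <= h wt we kappa x phi d eta zeta f omega_b gamma.
Proof.
  intros g hg.
  assert (hK : 0 <= x * phi * d * eta).
  { assert (0 <= x) by (destruct hx; lra).
    repeat apply Rmult_le_pos; lra. }
  assert (hzf : 0 < zeta * f) by nra.
  unfold h.
  apply Rplus_le_compat; apply Rmult_le_compat_l; try assumption.
  - exact (T_sum_le_at_half x phi d eta zeta f g hK hzf hg).
  - apply E_sum_le_at_half; nra.
Qed.
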